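(* Let $(Z,Y)$ be random with $Z\in[0,1]$, $Y\in\{0,1\}$, let $g:[0,1]\to[0,1]$, let $\alpha\ge1$, and let $\mathcal{B}=\{I_1,\dots,I_B\}$ be an $\alpha$-well-balanced binning scheme of size $B$ (with respect to $g(Z)$). Then $\mathrm{MSE}(g_{\mathcal{B}})\le \mathrm{MSE}(g)+\frac{2\alpha}{B}$.
   Context: A binning scheme of size $B$ is a set of intervals $I_1,\dots,I_B$ partitioning $[0,1]$; $\beta(z)$ is the index $j$ with $z\in I_j$. It is $\alpha$-well-balanced if $\frac{1}{\alpha B}\le\Pr(g(Z)\in I_j)\le\frac{\alpha}{B}$ for all $j$. $g_{\mathcal{B}}(z)=\mathbb{E}[g(Z)\mid g(Z)\in I_{\beta(g(z))}]$ and $\mathrm{MSE}(h)=\mathbb{E}[(h(Z)-Y)^2]$. *)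

From mathcomp Require Import all_boot all_order all_algebra.
From mathcomp Require Import all_classical all_reals all_analysis.
Set Implicit Arguments. Unset Strict Implicit. Unset Printing Implicit Defensive.
Import Order.TTheory GRing.Theory Num.Theory.
Local Open Scope classical_set_scope.
Local Open Scope ring_scope.

Definition cond_mean_in {d} {T : measurableType d} {R : realType}
  (P : probability T R) (X : T -> R) (A : set R) : R :=
  fine ('E_P[(fun w => (X w * \1_A (X w))%R)])%E / fine (P (X @^-1` A)).

Definition bin_index {R : realType} {B : nat} (I : 'I_B -> interval R) (z : R)
  : option 'I_B := [pick j | z \in I j].

(* g_B(z) = E[g(Z) | g(Z) \in I_{beta(g(z))}] ; default g z never used on [0,1] *)
Definition binned {d} {T : measurableType d} {R : realType}
  (P : probability T R) (Z : T -> R) (g : R -> R) {B : nat}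
  (I : 'I_B -> interval R) (z : R) : R :=
  match bin_index I (g z) with
  | Some j => cond_mean_in P (g \o Z) [set` I j]
  | None => g z
  end.

Definition MSE {d} {T : measurableType d} {R : realType}
  (P : probability T R) (Z Y : T -> R) (h : R -> R) : \bar R :=
  ('E_P[(fun w => ((h (Z w) - Y w) ^+ 2)%R)])%E.

Definition binning_scheme {R : realType} {B : nat} (I : 'I_B -> interval R) : Prop :=
  (forall j, [set` I j] `<=` `[0, 1]) /\
  (forall x : R, 0 <= x <= 1 -> exists! j, x \in I j).

Definition well_balanced {d} {T : measurableType d} {R : realType}
  (P : probability T R) (X : T -> R) (alpha : R) {B : nat}
  (I : 'I_B -> interval R) : Prop :=
  forall j, ((1 / (alpha * B%:R))%:E <= P (X @^-1` [set` I j])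
             /\ P (X @^-1` [set` I j]) <= (alpha / B%:R)%:E)%E.

From mathcomp Require Import all_boot all_order all_algebra.
From mathcomp Require Import all_classical all_reals all_analysis.
From mathcomp Require Import measurable_realfun lra.
Import Order.TTheory GRing.Theory Num.Theory.
Local Open Scope classical_set_scope.
Local Open Scope ring_scope.

(* If g(z) falls in the bin I_k, then so does the conditional mean m_k of g(Z)
   over that bin, so |m_k - g(z)| <= |I_k|.  As every value lies in [0, 1],
   replacing g(z) by m_k raises the squared error against any y in [0, 1] by at
   most 2 |I_k|.  In expectation the excess is sum_k 2 |I_k| P(g(Z) in I_k)
   <= (2 alpha / B) sum_k |I_k| <= 2 alpha / B, the bins being disjoint
   subintervals of [0, 1]. *)

Lemma lebesgue_measure_itv_ge_dist {R : realType} {A : interval R} {x y : R} :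
  x \in A -> y \in A -> (`|x - y|%:E <= lebesgue_measure [set` A])%E.
Proof.
wlog le_xy : x y / x <= y => [wlog_xy xA yA|xA yA].
  by case: (leP x y) => [/wlog_xy|/ltW/wlog_xy]; [apply | rewrite distrC; apply].
have sub_xy : `[x, y] `<=` [set` A].
  by move=> z /=; rewrite in_itv /= => xzy; exact: (interval_is_interval xA yA).
apply: le_trans (le_measure lebesgue_measure _ _ sub_xy); rewrite ?inE ?measurable_itv //.
(* [lebesgue_measure_itv] only rewrites the measure of a set ascribed [set R] *)
change (`|x - y|%:E <= lebesgue_measure ([set` `[x, y]%R] : set R))%E.
rewrite lebesgue_measure_itv /= lte_fin distrC ger0_norm ?subr_ge0 //.
case: (ltP x y) => [_|le_yx]; first by rewrite -EFinD.
by rewrite (@le_anti _ _ y x) ?le_xy ?le_yx // subrr.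
Qed.

Lemma sum_lebesgue_measure_bins_le1 {R : realType} {B : nat}
    {I : 'I_B -> interval R} :
  binning_scheme I -> (\sum_(k < B) lebesgue_measure [set` I k] <= 1)%E.
Proof.
case=> sub01 uniq_bin.
rewrite -(measure_bigsetU_ord lebesgue_measure); last 2 first.
- by move=> k; exact: measurable_itv.
- move=> i j _ _ [x [xi xj]].
  have [k [_ uniq_k]] := uniq_bin x (sub01 i x xi).
  by rewrite -(uniq_k i xi) -(uniq_k j xj).
have sub_bins : \big[setU/set0]_(k < B) [set` I k] `<=` `[0, 1]%classic.
  by apply: (big_ind (fun S : set R => S `<=` `[0, 1])) => // S1 S2 h1 h2 x [/h1|/h2].
apply: le_trans (le_measure lebesgue_measure _ _ sub_bins) _.
- by rewrite inE; apply: bigsetU_measurable => k _; exact: measurable_itv.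
- by rewrite inE; exact: measurable_itv.
change (lebesgue_measure ([set` `[0, 1]%R] : set R) <= 1)%E.
by rewrite lebesgue_measure_itv /= lte_fin ltr01 -EFinD subr0.
Qed.

Lemma integral_mul_indic_comp {d} {T : measurableType d} {R : realType}
    (mu : measure T R) {X : T -> R} {A : set R} {c : R} :
  measurable_fun setT X -> measurable A -> 0 <= c ->
  (\int[mu]_w (c * \1_A (X w))%:E = c%:E * mu (X @^-1` A))%E.
Proof.
move=> mX mA c0; have mXA : measurable (X @^-1` A) by rewrite -[_ @^-1` _]setTI; exact: mX.
under eq_integral do rewrite EFinM -[\1_A (X _)]/(\1_(X @^-1` A) _ : R).
rewrite ge0_integralZl ?integral_indic ?setIT //.
by apply/measurable_EFinP; exact: measurable_indic.
Qed.

Lemma cond_mean_in_bounds {d} {T : measurableType d} {R : realType}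
    (P : probability T R) {X : T -> R} {A : set R} {lo hi : R} :
  measurable_fun setT X -> measurable A -> 0 <= lo -> A `<=` `[lo, hi] ->
  (0 < P (X @^-1` A))%E -> lo <= cond_mean_in P X A <= hi.
Proof.
move=> mX mA lo0 A_lohi PA.
have mXA : measurable (X @^-1` A) by rewrite -[_ @^-1` _]setTI; exact: mX.
have mIA : measurable_fun setT (fun w => \1_A (X w) : R).
  exact: measurableT_comp (measurable_indic mA) mX.
have mXIA : measurable_fun setT (fun w => X w * \1_A (X w)) by exact: measurable_funM.
have [w Aw] : exists w, A (X w).
  apply: contrapT => noA; move: PA; suff -> : X @^-1` A = set0 by rewrite measure0 ltxx.
  by apply/seteqP; split=> // w Aw; apply: noA; exists w.
have /andP[lo_Xw Xw_hi] : lo <= X w <= hi by have := A_lohi _ Aw; rewrite /= in_itv.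
have hi0 : 0 <= hi by rewrite (le_trans lo0) // (le_trans lo_Xw).
have bound_pt w' : lo * \1_A (X w') <= X w' * \1_A (X w') <= hi * \1_A (X w').
  rewrite indicE; case: (boolP (X w' \in A)) => [/set_mem /A_lohi|_].
    by rewrite /= in_itv /= !mulr1.
  by rewrite !mulr0 lexx.
have XIA_ge0 w' : 0 <= X w' * \1_A (X w').
  by apply: le_trans (andP (bound_pt w')).1; rewrite indicE mulr_ge0.
set E := ('E_P[(fun w' => (X w' * \1_A (X w'))%R)])%E; set p := P (X @^-1` A).
have p_fin : p \is a fin_num by exact: fin_num_measure.
have lower : ((lo * fine p)%:E <= E)%E.
  rewrite EFinM fineK // -integral_mul_indic_comp // /E unlock.
  apply: ge0_le_integral => //; first by move=> w' _; rewrite lee_fin indicE mulr_ge0.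
  - by apply/measurable_EFinP; exact: measurable_funM.
  - by apply/measurable_EFinP.
  - by move=> w' _; rewrite lee_fin (andP (bound_pt w')).1.
have upper : (E <= (hi * fine p)%:E)%E.
  rewrite EFinM fineK // -integral_mul_indic_comp // /E unlock.
  apply: ge0_le_integral => //; first by move=> w' _; rewrite lee_fin.
  - by apply/measurable_EFinP.
  - by apply/measurable_EFinP; exact: measurable_funM.
  - by move=> w' _; rewrite lee_fin (andP (bound_pt w')).2.
have E_fin : E \is a fin_num.
  rewrite ge0_fin_numE; first exact: le_lt_trans upper (ltry _).
  by apply: le_trans lower; rewrite lee_fin mulr_ge0 // fine_ge0 // measure_ge0.
have p_gt0 : 0 < fine p by rewrite -lte_fin fineK.
rewrite -(fineK E_fin) !lee_fin in lower upper.
by rewrite /cond_mean_in -/E -/p ler_pdivlMr // ler_pdivrMr // lower upper.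
Qed.

Lemma sqr_sub_shift_le (R : realDomainType) (m x y w : R) :
  0 <= m <= 1 -> 0 <= x <= 1 -> 0 <= y <= 1 -> `|m - x| <= w ->
  (m - y) ^+ 2 <= (x - y) ^+ 2 + 2 * w.
Proof. by move=> /andP[? ?] /andP[? ?] /andP[? ?] /ler_normlP[? ?]; nra. Qed.

Lemma binning_scheme_size_gt0 {R : realType} {B : nat} {I : 'I_B -> interval R} :
  binning_scheme I -> (0 < B)%N.
Proof. by case=> _ /(_ 0); rewrite lexx ler01 => /(_ isT) [[k kB] _]; exact: leq_ltn_trans kB. Qed.

Section BinnedPredictor.
Context {d : measure_display} {T : measurableType d} {R : realType}.
Variables (P : probability T R) (Z : T -> R) (g : R -> R) (alpha : R) (B : nat).
Variable I : 'I_B -> interval R.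
Hypothesis mgZ : measurable_fun setT (g \o Z).
Hypothesis gZ01 : forall w, 0 <= g (Z w) <= 1.
Hypothesis alpha_gt0 : 0 < alpha.
Hypothesis binI : binning_scheme I.
Hypothesis balI : well_balanced P (g \o Z) alpha I.

Definition bin_width k := fine (lebesgue_measure [set` I k]).
Definition bin_mass k := fine (P ((g \o Z) @^-1` [set` I k])).
Definition bin_mean k := cond_mean_in P (g \o Z) [set` I k].
Definition binning_excess w := \sum_(k < B) 2 * bin_width k * \1_[set` I k] (g (Z w)).

Lemma exists_bin w : exists k, g (Z w) \in I k.
Proof. by have [k [gk _]] := binI.2 _ (gZ01 w); exists k. Qed.

Lemma sum_indic_bin (F : 'I_B -> R) {k w} : g (Z w) \in I k ->
  \sum_(j < B) F j * \1_[set` I j] (g (Z w)) = F k.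
Proof.
move=> gk; have [_ /(_ _ (gZ01 w))[k' [_ uniq_k']]] := binI.
rewrite (bigD1 k) //= indicE mem_set // mulr1 big1 ?addr0 // => j jk.
rewrite indicE memNset ?mulr0 //= => gj.
by move: jk; rewrite -(uniq_k' j gj) -(uniq_k' k gk) eqxx.
Qed.

Lemma binned_bin_mean {k w} : g (Z w) \in I k -> binned P Z g I (Z w) = bin_mean k.
Proof.
move=> gk; have [_ /(_ _ (gZ01 w))[k' [_ uniq_k']]] := binI.
rewrite /binned /bin_index; case: pickP => [j gj|/(_ k)]; last by rewrite gk.
by rewrite /bin_mean -(uniq_k' j gj) -(uniq_k' k gk).
Qed.

Lemma measurable_binned : measurable_fun setT (fun w => binned P Z g I (Z w)).
Proof.
have binnedE w : binned P Z g I (Z w) = \sum_(k < B) bin_mean k * \1_[set` I k] (g (Z w)).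
  by have [k gk] := exists_bin w; rewrite (binned_bin_mean gk) (sum_indic_bin _ gk).
rewrite (funext binnedE); apply: measurable_sum => k; apply: measurable_funM => //.
exact: measurableT_comp (measurable_indic (measurable_itv _)) mgZ.
Qed.

Lemma bin_width_ge0 k : 0 <= bin_width k.
Proof. exact/fine_ge0/measure_ge0. Qed.

Lemma lebesgue_measure_bin k : lebesgue_measure [set` I k] = (bin_width k)%:E.
Proof.
rewrite fineK // ge0_fin_numE ?measure_ge0 //; apply: le_lt_trans (ltry 1).
apply: le_trans (sum_lebesgue_measure_bins_le1 binI); rewrite (bigD1 k) //= leeDl //.
by apply: sume_ge0 => j _; exact: measure_ge0.
Qed.

Lemma sum_bin_width_le1 : \sum_(k < B) bin_width k <= 1.
Proof.
rewrite -lee_fin -sumEFin; under eq_bigr do rewrite -lebesgue_measure_bin.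
exact: sum_lebesgue_measure_bins_le1.
Qed.

Lemma bin_massE k : P ((g \o Z) @^-1` [set` I k]) = (bin_mass k)%:E.
Proof. by rewrite fineK //; apply: fin_num_measure; rewrite -[_ @^-1` _]setTI; exact: mgZ. Qed.

Lemma bin_mass_gt0 k : 0 < bin_mass k.
Proof.
have B_gt0 : 0 < B%:R :> R by rewrite ltr0n (binning_scheme_size_gt0 binI).
apply: lt_le_trans (_ : 1 / (alpha * B%:R) <= _); first by rewrite divr_gt0 ?mulr_gt0.
by rewrite -lee_fin -bin_massE; case: (balI k).
Qed.

Lemma bin_mass_le k : bin_mass k <= alpha / B%:R.
Proof. by rewrite -lee_fin -bin_massE; case: (balI k). Qed.

Lemma bin_mean_near {k x} : x \in I k ->
  0 <= bin_mean k <= 1 /\ `|bin_mean k - x| <= bin_width k.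
Proof.
move=> xk; have /andP[x0 x1] : 0 <= x <= 1 by have := binI.1 k x xk; rewrite /= in_itv.
have wk0 := bin_width_ge0 k.
have bin_sub : [set` I k] `<=` `[Num.max 0 (x - bin_width k), Num.min 1 (x + bin_width k)].
  move=> y yk; have /andP[y0 y1] : 0 <= y <= 1 by have := binI.1 k y yk; rewrite /= in_itv.
  have := lebesgue_measure_itv_ge_dist xk yk.
  rewrite lebesgue_measure_bin lee_fin => /ler_normlP[? ?].
  by rewrite /= in_itv /= ge_max le_min; apply/andP; split; apply/andP; split; lra.
have := cond_mean_in_bounds P mgZ (measurable_itv _) _ bin_sub.
rewrite bin_massE lte_fin bin_mass_gt0 le_max lexx => /(_ isT isT).
rewrite ge_max le_min -/(bin_mean k) => /andP[/andP[? ?] /andP[? ?]].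
by split; [apply/andP; split | apply/ler_normlP; split]; lra.
Qed.

Lemma sqr_err_binned_le w y : 0 <= y <= 1 ->
  (binned P Z g I (Z w) - y) ^+ 2 <= (g (Z w) - y) ^+ 2 + binning_excess w.
Proof.
move=> y01; have [k gk] := exists_bin w.
rewrite (binned_bin_mean gk) /binning_excess (sum_indic_bin _ gk).
by have [? ?] := bin_mean_near gk; exact: sqr_sub_shift_le.
Qed.

Lemma binning_excess_ge0 w : 0 <= binning_excess w.
Proof. by apply: sumr_ge0 => k _; rewrite indicE !mulr_ge0 ?bin_width_ge0. Qed.

Lemma measurable_binning_excess : measurable_fun setT binning_excess.
Proof.
apply: measurable_sum => k; apply: measurable_funM => //.
exact: measurableT_comp (measurable_indic (measurable_itv _)) mgZ.
Qed.

Lemma integral_binning_excess_le :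
  (\int[P]_w (binning_excess w)%:E <= (2 * alpha / B%:R)%:E)%E.
Proof.
under eq_integral do rewrite /binning_excess -sumEFin.
rewrite ge0_integral_sum //; last 2 first.
- move=> k; apply/measurable_EFinP; apply: measurable_funM => //.
  exact: measurableT_comp (measurable_indic (measurable_itv _)) mgZ.
- by move=> k w _; rewrite lee_fin indicE !mulr_ge0 ?bin_width_ge0.
under eq_bigr do rewrite (integral_mul_indic_comp _ mgZ (measurable_itv _))
  ?mulr_ge0 ?bin_width_ge0 //.
rewrite (eq_bigr (fun k => (2 * bin_width k * bin_mass k)%:E)); last first.
  by move=> k _; rewrite [RHS]EFinM -bin_massE.
rewrite sumEFin lee_fin.
apply: le_trans (_ : \sum_(k < B) (2 * alpha / B%:R) * bin_width k <= _).
  apply: ler_sum => k _; rewrite mulrAC ler_wpM2r ?bin_width_ge0 //.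
  by rewrite -mulrA ler_wpM2l // bin_mass_le.
by rewrite -mulr_sumr ler_piMr ?sum_bin_width_le1 // divr_ge0 // mulr_ge0 // ltW.
Qed.

Lemma MSE_binned_le (Y : T -> R) : measurable_fun setT Y -> (forall w, 0 <= Y w <= 1) ->
  (MSE P Z Y (binned P Z g I) <= MSE P Z Y g + (2 * alpha / B%:R)%:E)%E.
Proof.
move=> mY Y01; rewrite /MSE !unlock.
have msqr_err (h : R -> R) : measurable_fun setT (fun w => h (Z w)) ->
    measurable_fun setT (fun w => (h (Z w) - Y w) ^+ 2).
  by move=> mhZ; apply: measurable_funX; exact: measurable_funB.
apply: (@le_trans _ _ (\int[P]_w ((g (Z w) - Y w) ^+ 2 + binning_excess w)%:E)%E).
  apply: ge0_le_integral => //.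
  - by move=> w _; rewrite lee_fin sqr_ge0.
  - exact/measurable_EFinP/msqr_err/measurable_binned.
  - exact/measurable_EFinP/measurable_funD/measurable_binning_excess/msqr_err.
  - by move=> w _; rewrite lee_fin sqr_err_binned_le.
under eq_integral do rewrite EFinD.
rewrite ge0_integralD //; last 4 first.
- by move=> w _; rewrite lee_fin sqr_ge0.
- exact/measurable_EFinP/msqr_err.
- by move=> w _; rewrite lee_fin binning_excess_ge0.
- exact/measurable_EFinP/measurable_binning_excess.
exact/leeD2l/integral_binning_excess_le.
Qed.

End BinnedPredictor.

Theorem mainTheorem6 (d : measure_display) (T : measurableType d) (R : realType)
  (P : probability T R) (Z Y : T -> R) (g : R -> R) (alpha : R) (B : nat)
  (I : 'I_B -> interval R) :
  measurable_fun setT Z -> measurable_fun setT Y ->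
  (forall w, 0 <= Z w <= 1) -> (forall w, Y w = 0 \/ Y w = 1) ->
  measurable_fun (`[0, 1] : set R) g -> (forall x, 0 <= x <= 1 -> 0 <= g x <= 1) ->
  1 <= alpha ->
  binning_scheme I -> well_balanced P (g \o Z) alpha I ->
  (MSE P Z Y (binned P Z g I) <= MSE P Z Y g + (2 * alpha / B%:R)%:E)%E.
Proof.
move=> mZ mY Z01 Y01 mg g01 alpha_ge1 binI balI.
have mgZ : measurable_fun setT (g \o Z).
  apply: (measurable_comp (measurable_itv `[0, 1]) _ mg mZ).
  by move=> _ [w _ <-]; rewrite /= in_itv /=; exact: Z01.
apply: MSE_binned_le => //.
- by move=> w; exact/g01/Z01.
- exact: lt_le_trans ltr01 alpha_ge1.
- by move=> w; case: (Y01 w) => ->; rewrite lexx ler01.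
Qed.
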